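(* Let $k$ be a positive integer and let $G$ be a graph on $m\ge NPO(k)$ vertices. Let $d_1\ge d_2\ge\cdots\ge d_m$ be the vertex degrees of $G$ and $\lambda_1\ge\lambda_2\ge\cdots\ge\lambda_m$ the eigenvalues of the Laplacian matrix $L(G)$. Then $\lambda_k\ge d_{NPO(k)}$.
   Context: All graphs are finite, simple, unweighted and undirected; $A(G)$ denotes the adjacency matrix and $L(G)=D(G)-A(G)$ the Laplacian matrix, where $D(G)$ is the diagonal matrix of vertex degrees. Eigenvalues are counted with multiplicity. For a positive integer $k$, $NPO(k)$ is the smallest integer $n$ such that the adjacency matrix of every graph with at least $n$ vertices has at least $k$ nonpositive eigenvalues. *)

From HB Require Import structures.
From mathcomp Require Import all_boot all_order all_algebra all_field.
Set Implicit Arguments. Unset Strict Implicit. Unset Printing Implicit Defensive.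
Import Order.TTheory GRing.Theory Num.Theory.
Local Open Scope ring_scope.

Definition simple_graph (n : nat) (e : rel 'I_n) : Prop :=
  (forall x y, e x y = e y x) /\ (forall x, ~~ e x x).

Definition deg (n : nat) (e : rel 'I_n) (i : 'I_n) : nat := #|[set j | e i j]|.

Definition adj_mx (n : nat) (e : rel 'I_n) : 'M[algC]_n :=
  \matrix_(i, j) (e i j)%:R.
Definition lap_mx (n : nat) (e : rel 'I_n) : 'M[algC]_n :=
  \matrix_(i, j) ((i == j)%:R * (deg e i)%:R) - adj_mx e.

Definition eigs (n : nat) (M : 'M[algC]_n) : seq algC :=
  sval (closed_field_poly_normal (char_poly M)).

Definition eigs_sorted (n : nat) (M : 'M[algC]_n) : seq algC :=
  sort (fun x y => y <= x) (eigs M).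

(* i-th largest eigenvalue, 1-indexed *)
Definition lambda (n : nat) (M : 'M[algC]_n) (i : nat) : algC :=
  nth 0 (eigs_sorted M) i.-1.

(* degrees sorted nonincreasingly: d_1 >= ... >= d_n, and d_i (1-indexed) *)
Definition degs_sorted (n : nat) (e : rel 'I_n) : seq nat :=
  sort geq [seq deg e i | i <- enum 'I_n].
Definition dsorted (n : nat) (e : rel 'I_n) (i : nat) : nat :=
  nth 0%N (degs_sorted e) i.-1.

Definition n_nonpos_adj (n : nat) (e : rel 'I_n) : nat :=
  count (fun x : algC => x <= 0) (eigs (adj_mx e)).

Definition npo_prop (k n : nat) : Prop :=
  forall (m : nat) (e : rel 'I_m), (n <= m)%N -> simple_graph e ->
    (k <= n_nonpos_adj e)%N.

Definition is_NPO (k N : nat) : Prop :=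
  npo_prop k N /\ (forall n, npo_prop k n -> (N <= n)%N).

From HB Require Import structures.
From mathcomp Require Import all_boot all_order all_algebra all_field zify.
Set Implicit Arguments. Unset Strict Implicit. Unset Printing Implicit Defensive.
Import Order.TTheory GRing.Theory Num.Theory.
Local Open Scope ring_scope.
Local Open Scope sesquilinear_scope.

(* Let d = d_N and let H be the subgraph induced by N vertices of degree at
   least d (they exist because the degree sequence is sorted).  By definition
   of NPO(k), A(H) has at least k nonpositive eigenvalues.  Write E for the
   N x m matrix selecting these vertices; then E L(G) E* = D - A(H) where D is
   the diagonal matrix of their degrees, all >= d.  A Courant-Fischer style
   dimension count ([compression_count]) shows that the eigenvectors of A(H)
   with nonpositive eigenvalues (pushed into C^m by E) and the eigenvectors of
   L(G) with eigenvalues < d span subspaces meeting only in 0: on the first,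
   x L x* >= d |x|^2, on the second x L x* < d |x|^2 for x <> 0.  Hence
   #{nonpositive eigenvalues of A(H)} + #{eigenvalues of L(G) below d} <= m,
   so at least k eigenvalues of L(G) are >= d, i.e. lambda_k >= d. *)

Lemma count_enum_card (T : finType) (p : pred T) :
  count p (enum T) = #|[set x | p x]|.
Proof. by rewrite cardsE cardE enumT /enum_mem size_filter. Qed.

(* In a sequence sorted by a reflexive transitive relation, at least j+1
   items [x] satisfy [leT x s_j] (the first j+1 do).  Applied to degrees:
   at least N vertices have degree >= d_N. *)
Lemma count_ge_nth_sorted (T : Type) (leT : rel T) (x0 : T) (s : seq T)
    (j : nat) :
  transitive leT -> reflexive leT -> sorted leT s -> (j < size s)%N ->
  (j.+1 <= count (leT^~ (nth x0 s j)) s)%N.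
Proof.
move=> leT_tr leT_refl s_sorted j_lt.
have prefix_le : all (leT^~ (nth x0 s j)) (take j.+1 s).
  apply/(all_nthP x0) => i; rewrite size_takel // ltnS => i_le.
  rewrite nth_take //; apply: sorted_leq_nth => //; rewrite inE //.
  exact: leq_ltn_trans j_lt.
rewrite -[in X in count _ X](cat_take_drop j.+1 s) count_cat.
move: prefix_le; rewrite all_count size_takel // => /eqP ->.
exact: leq_addr.
Qed.

Lemma nth_sorted_ge (R : numDomainType) (s : seq R) (t : R) (k : nat) :
  all (fun x => x \is Num.real) s -> t \is Num.real ->
  sorted (fun x y => y <= x) s -> (0 < k)%N ->
  (k <= count (fun x => (t <= x)%R) s)%N -> t <= nth 0 s k.-1.
Proof.
move=> s_real t_real s_sorted k_gt0 k_le.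
have k_size : (k.-1 < size s)%N.
  by rewrite prednK //; exact: leq_trans k_le (count_size _ _).
have sk_real : nth 0 s k.-1 \is Num.real by apply: (allP s_real); exact: mem_nth.
rewrite real_leNgt //; apply/negP => sk_lt_t.
have tail_lt : count (fun x => t <= x) (drop k.-1 s) = 0%N.
  apply/eqP; rewrite -leqn0 leqNgt -has_count; apply/hasPn => x /(nthP 0) [i].
  rewrite size_drop ltn_subRL => i_lt <-; rewrite nth_drop.
  have x_real : nth 0 s (k.-1 + i) \is Num.real.
    by apply: (allP s_real); exact: mem_nth.
  rewrite -real_ltNge //; apply: le_lt_trans sk_lt_t.
  have ge_tr : transitive (fun x y : R => y <= x).
    by move=> a b c /= ba cb; exact: le_trans cb ba.
  apply: (sorted_leq_nth ge_tr (fun a => lexx a) 0 s_sorted) => //.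
  exact: leq_addr.
have drop_tail :
    count (fun x => t <= x) s = count (fun x => t <= x) (take k.-1 s).
  by rewrite -{1}(cat_take_drop k.-1 s) count_cat tail_lt addn0.
move: k_le; rewrite drop_tail => /leq_trans/(_ (count_size _ _)).
rewrite size_takel; last exact: ltnW.
by rewrite -ltnS prednK // ltnn.
Qed.

Lemma char_poly_conj n (P D : 'M[algC]_n) : P \in unitmx ->
  char_poly (invmx P *m D *m P) = char_poly D.
Proof.
move=> P_unit.
have PVP : map_mx polyC (invmx P) *m map_mx polyC P = 1%:M.
  by rewrite -map_mxM mulVmx // map_mx1.
have PPV : map_mx polyC P *m map_mx polyC (invmx P) = 1%:M.
  by rewrite -map_mxM mulmxV // map_mx1.
have conj_mx : char_poly_mx (invmx P *m D *m P) =
    map_mx polyC (invmx P) *m char_poly_mx D *m map_mx polyC P.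
  rewrite /char_poly_mx mulmxBr mulmxBl !map_mxM; congr (_ - _).
  by rewrite -mulmxA -scalar_mxC mulmxA PVP mul1mx.
by rewrite /char_poly conj_mx !det_mulmx mulrC mulrA -det_mulmx PPV det1 mul1r.
Qed.

Lemma eigs_normal n (M : 'M[algC]_n) : M \is normalmx ->
  perm_eq (eigs M) [seq spectral_diag M 0 i | i <- enum 'I_n].
Proof.
move=> /orthomx_spectralP M_spectral.
have char_M : char_poly M =
    \prod_(z <- [seq spectral_diag M 0 i | i <- enum 'I_n]) ('X - z%:P).
  rewrite {1}M_spectral char_poly_conj ?spectral_unit //.
  rewrite char_poly_trig ?diag_mx_is_trig // big_map big_enum /=.
  by apply: eq_bigr => i _; rewrite mxE eqxx mulr1n.
rewrite /eigs; case: closed_field_poly_normal => r /= char_r.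
rewrite (monicP (char_poly_monic _)) scale1r in char_r.
by apply: prod_XsubC_eq; rewrite -char_r.
Qed.

Lemma count_eigs n (M : 'M[algC]_n) (p : pred algC) : M \is normalmx ->
  count p (eigs M) = #|[set j | p (spectral_diag M 0 j)]|.
Proof.
by move=> /eigs_normal/permP ->; rewrite count_map count_enum_card.
Qed.

Lemma eigs_real n (M : 'M[algC]_n) : M \is hermsymmx ->
  all (fun x => x \is Num.real) (eigs M).
Proof.
move=> M_herm; apply/allP => x.
rewrite (perm_mem (eigs_normal (hermitian_normalmx M_herm))) => /mapP [j _ ->].
by have /mxOverP := hermitian_spectral_diag_real M_herm; apply.
Qed.

Lemma count_eigs_split n (M : 'M[algC]_n) (t : algC) :
  M \is hermsymmx -> t \is Num.real ->
  (count (fun x => (t <= x)%R) (eigs M) +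
   count (fun x => (x < t)%R) (eigs M))%N = n.
Proof.
move=> M_herm t_real.
have -> : count (fun x => x < t) (eigs M) =
          count (predC (fun x => t <= x)) (eigs M).
  apply/eq_in_count => x /(allP (eigs_real M_herm)) x_real.
  by rewrite /= real_ltNge.
rewrite count_predC (perm_size (eigs_normal (hermitian_normalmx M_herm))).
by rewrite size_map size_enum_ord.
Qed.

Lemma lambda_ge n (M : 'M[algC]_n) (t : algC) (k : nat) :
  M \is hermsymmx -> t \is Num.real -> (0 < k)%N ->
  (k <= count (fun x => (t <= x)%R) (eigs M))%N -> t <= lambda M k.
Proof.
move=> M_herm t_real k_gt0 k_le; apply: nth_sorted_ge => //.
- by apply/allP => x; rewrite mem_sort => /(allP (eigs_real M_herm)).
- apply: (sort_sorted_in (P := Num.real)); last exact: eigs_real.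
  by move=> x y x_real y_real; exact: real_leVge.
- by rewrite count_sort.
Qed.

Definition qform n (M : 'M[algC]_n) (x : 'rV_n) : algC := (x *m M *m x ^t*) 0 0.
Definition sqnorm n (x : 'rV[algC]_n) : algC := (x *m x ^t*) 0 0.

Lemma trmxC_mul m n p (A : 'M[algC]_(m, n)) (B : 'M_(n, p)) :
  (A *m B) ^t* = B ^t* *m A ^t*.
Proof. by rewrite trmx_mul map_mxM. Qed.

Lemma sqnormE n (y : 'rV[algC]_n) : sqnorm y = \sum_j y 0 j * (y 0 j)^*.
Proof. by rewrite /sqnorm mxE; apply: eq_bigr => j _; rewrite !mxE. Qed.

Lemma qform_diag n (g y : 'rV[algC]_n) :
  qform (diag_mx g) y = \sum_j g 0 j * (y 0 j * (y 0 j)^*).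
Proof.
rewrite /qform mxE; apply: eq_bigr => j _.
by rewrite mul_mx_diag !mxE mulrAC mulrC.
Qed.

Lemma qformB n (A B : 'M[algC]_n) (y : 'rV_n) :
  qform (A - B) y = qform A y - qform B y.
Proof. by rewrite /qform mulmxBr mulmxBl !mxE. Qed.

Lemma qform_compress m r (M : 'M[algC]_m) (E : 'M_(r, m)) (y : 'rV_r) :
  qform M (y *m E) = qform (E *m M *m E ^t*) y.
Proof. by rewrite /qform trmxC_mul !mulmxA. Qed.

Lemma sqnorm_isometry m r (E : 'M[algC]_(r, m)) (y : 'rV_r) :
  E \is unitarymx -> sqnorm (y *m E) = sqnorm y.
Proof. by move=> E_unitary; rewrite /sqnorm trmxC_mul mulmxA mulmxtVK. Qed.

Lemma qform_diag_ge n (g y : 'rV[algC]_n) (t : algC) :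
  (forall j, t <= g 0 j) -> t * sqnorm y <= qform (diag_mx g) y.
Proof.
move=> t_le; rewrite sqnormE qform_diag mulr_sumr; apply: ler_sum => j _.
by apply: ler_wpM2r; [exact: mul_conjC_ge0 | exact: t_le].
Qed.

(* Selecting distinct rows of a matrix with orthonormal rows keeps them
   orthonormal; with P = 1 this gives the vertex-selection matrix. *)
Lemma rowsub_unitary m n r (f : 'I_r -> 'I_m) (P : 'M[algC]_(m, n)) :
  injective f -> P \is unitarymx -> rowsub f P \is unitarymx.
Proof.
move=> f_inj /row_unitarymxP P_orth; apply/row_unitarymxP => i j.
by rewrite !row_rowsub P_orth (inj_eq f_inj).
Qed.

Lemma unitarymx1 n : (1%:M : 'M[algC]_n) \is unitarymx.
Proof. by apply/unitarymxP; rewrite trmx1 map_mx1 mulmx1. Qed.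

Lemma compress_selection m r (f : 'I_r -> 'I_m) (A : 'M[algC]_m) :
  rowsub f 1%:M *m A *m (rowsub f 1%:M) ^t* = mxsub f f A.
Proof.
apply/matrixP => i j; rewrite mul_rowsub_mx mul1mx mxE (bigD1 (f j)) //= big1.
  by rewrite !mxE eqxx conjC1 mulr1 addr0.
by move=> l l_neq; rewrite !mxE (eq_sym (f j)) (negbTE l_neq) conjC0 mulr0.
Qed.

(* The matrix of the rows of P indexed by S: when P diagonalises M, its row
   space is spanned by the eigenvectors attached to the indices in S. *)
Definition span_rows n (S : {set 'I_n}) (P : 'M[algC]_n) : 'M_(#|S|, n) :=
  rowsub (fun i : 'I_#|S| => enum_val i) P.

Lemma span_rows_unitary n (S : {set 'I_n}) (P : 'M[algC]_n) :
  P \is unitarymx -> span_rows S P \is unitarymx.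
Proof. by apply: rowsub_unitary; exact: enum_val_inj. Qed.

Lemma sub_span_rows n (S : {set 'I_n}) (P : 'M[algC]_n) (x : 'rV_n) :
  (x <= span_rows S P)%MS ->
  exists2 c : 'rV_n, x = c *m P & forall j, j \notin S -> c 0 j = 0.
Proof.
case/submxP => b ->; exists (b *m rowsub (fun i : 'I_#|S| => enum_val i) 1%:M).
  by rewrite -mulmxA mul_rowsub_mx mul1mx.
move=> j j_notin; rewrite !mxE big1 // => l _; rewrite !mxE.
have -> : (enum_val l == j) = false.
  by apply: contraNF j_notin => /eqP <-; exact: enum_valP.
by rewrite mulr0.
Qed.

Lemma exists_common_vector m1 m2 n (U : 'M[algC]_(m1, n)) (W : 'M_(m2, n)) :
  (n < \rank U + \rank W)%N ->
  exists x : 'rV_n, [/\ x != 0, (x <= U)%MS & (x <= W)%MS].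
Proof.
move=> rank_gt; have : (U :&: W)%MS != 0.
  rewrite -mxrank_eq0; have := mxrank_sum_cap U W.
  have := rank_leq_col (U + W)%MS; lia.
case/rowV0Pn => x x_sub x_neq0; exists x.
by rewrite sub_capmx in x_sub; case/andP: x_sub.
Qed.

Section RayleighBounds.

Variables (n : nat) (M : 'M[algC]_n).
Hypothesis M_normal : M \is normalmx.

Let P := spectralmx M.
Let X := spectral_diag M.

Lemma rayleigh_gap (t : algC) (c : 'rV_n) :
  t * sqnorm (c *m P) - qform M (c *m P) =
  \sum_j (t - X 0 j) * (c 0 j * (c 0 j)^*).
Proof.
have P_unitary : P \is unitarymx by exact: spectral_unitarymx.
have M_diag : M = invmx P *m diag_mx X *m P := orthomx_spectralP M_normal.
rewrite sqnorm_isometry // sqnormE qform_compress M_diag invmx_unitary //.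
rewrite -!mulmxA mulmxA (unitarymxP P_unitary) mulmxA mul1mx mulmx1.
rewrite qform_diag mulr_sumr -sumrB.
by apply: eq_bigr => j _; rewrite mulrBl.
Qed.

Lemma qform_le_span (S : {set 'I_n}) (t : algC) (x : 'rV_n) :
  (forall j, j \in S -> X 0 j <= t) -> (x <= span_rows S P)%MS ->
  qform M x <= t * sqnorm x.
Proof.
move=> X_le /sub_span_rows [c -> c_supp]; rewrite -subr_ge0 rayleigh_gap.
apply: sumr_ge0 => j _; have [j_in | j_notin] := boolP (j \in S).
  by rewrite mulr_ge0 ?mul_conjC_ge0 // subr_ge0 X_le.
by rewrite c_supp // mul0r mulr0.
Qed.

Lemma qform_lt_span (S : {set 'I_n}) (t : algC) (x : 'rV_n) :
  (forall j, j \in S -> X 0 j < t) -> (x <= span_rows S P)%MS -> x != 0 ->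
  qform M x < t * sqnorm x.
Proof.
move=> X_lt /sub_span_rows [c -> c_supp] x_neq0; rewrite -subr_gt0 rayleigh_gap.
have term_ge0 j : true -> 0 <= (t - X 0 j) * (c 0 j * (c 0 j)^*).
  have [j_in | j_notin] := boolP (j \in S).
    by rewrite mulr_ge0 ?mul_conjC_ge0 // subr_ge0 ltW ?X_lt.
  by rewrite c_supp // mul0r mulr0.
rewrite lt_def sumr_ge0 // andbT; apply: contraNneq x_neq0 => /psumr_eq0P sum0.
suff -> : c = 0 by rewrite mul0mx.
apply/rowP => j; rewrite mxE.
have [j_in | j_notin] := boolP (j \in S); last exact: c_supp.
move/eqP: (sum0 term_ge0 j isT); rewrite mulf_eq0 mul_conjC_eq0 subr_eq0.
by case/orP => [/eqP t_eq | /eqP //]; move: (X_lt j j_in); rewrite t_eq ltxx.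
Qed.

End RayleighBounds.

(* If E has orthonormal rows and the compression E M E*
   equals D - B with D diagonal with entries >= t, then the number of
   nonpositive eigenvalues of B plus the number of eigenvalues of M below t
   is at most m: otherwise the two eigenspaces meet, and a common nonzero x
   would satisfy both x M x* < t |x|^2 and x M x* >= t |x|^2. *)
Lemma compression_count m r (M : 'M[algC]_m) (B : 'M_r) (E : 'M_(r, m))
    (g : 'rV_r) (t : algC) :
  M \is normalmx -> B \is normalmx -> E \is unitarymx ->
  E *m M *m E ^t* = diag_mx g - B -> (forall j, t <= g 0 j) ->
  (count (fun x => (x <= 0)%R) (eigs B) +
   count (fun x => (x < t)%R) (eigs M) <= m)%N.
Proof.
move=> M_normal B_normal E_unitary M_compress t_le.
rewrite !count_eigs //.
set SB := [set j | spectral_diag B 0 j <= 0].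
set SM := [set j | spectral_diag M 0 j < t].
rewrite leqNgt; apply/negP => too_many.
have [x [x_neq0 x_in_B x_in_M]] :
    exists x : 'rV_m, [/\ x != 0, (x <= span_rows SB (spectralmx B) *m E)%MS
                                  & (x <= span_rows SM (spectralmx M))%MS].
  apply: exists_common_vector.
  by rewrite !mxrank_unitary
       ?mul_unitarymx ?span_rows_unitary ?spectral_unitarymx.
have x_low : qform M x < t * sqnorm x.
  by apply: (qform_lt_span M_normal) x_in_M x_neq0 => j; rewrite inE.
have [y y_in_B x_eq] :
    exists2 y, (y <= span_rows SB (spectralmx B))%MS & x = y *m E.
  by case/submxP: x_in_B => b ->; exists (b *m span_rows SB (spectralmx B));
    rewrite ?submxMl ?mulmxA.
have B_nonpos : qform B y <= 0 * sqnorm y.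
  by apply: (qform_le_span B_normal) y_in_B => j; rewrite inE.
have x_high : t * sqnorm x <= qform M x.
  rewrite x_eq qform_compress M_compress qformB sqnorm_isometry // -[t * _]subr0.
  by apply: lerB; [exact: qform_diag_ge | rewrite mul0r in B_nonpos].
by have := lt_le_trans x_low x_high; rewrite ltxx.
Qed.

Lemma real_symmetric_hermsymmx n (M : 'M[algC]_n) :
  (forall i j, M i j = M j i) -> (forall i j, M i j \is Num.real) ->
  M \is hermsymmx.
Proof.
move=> M_sym M_real; apply/is_hermitianmxP; apply/matrixP => i j.
by rewrite !mxE /= expr0 mul1r conj_Creal.
Qed.

Section SimpleGraph.

Variables (m : nat) (e : rel 'I_m).
Hypothesis e_simple : simple_graph e.

Lemma adj_hermsymmx : adj_mx e \is hermsymmx.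
Proof.
by apply: real_symmetric_hermsymmx => i j; rewrite !mxE ?realn // e_simple.1.
Qed.

Lemma lap_hermsymmx : lap_mx e \is hermsymmx.
Proof.
apply: real_symmetric_hermsymmx => i j; rewrite !mxE.
  by rewrite e_simple.1 (eq_sym j); case: eqP => [->|]; rewrite ?mul0r.
by rewrite rpredB ?rpredM ?realn.
Qed.

Definition induced_graph r (f : 'I_r -> 'I_m) : rel 'I_r :=
  fun i j => e (f i) (f j).

Lemma induced_simple r (f : 'I_r -> 'I_m) : simple_graph (induced_graph f).
Proof. by split => *; [exact: e_simple.1 | exact: e_simple.2]. Qed.

Lemma lap_compress r (f : 'I_r -> 'I_m) : injective f ->
  rowsub f 1%:M *m lap_mx e *m (rowsub f 1%:M) ^t* =
  diag_mx (\row_i (deg e (f i))%:R) - adj_mx (induced_graph f).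
Proof.
move=> f_inj; rewrite compress_selection; apply/matrixP => i j.
by rewrite !mxE (inj_eq f_inj); case: eqP => [->|]; rewrite ?mul1r ?mul0r.
Qed.

Lemma top_degree_vertices N : (N <= m)%N ->
  exists2 f : 'I_N -> 'I_m, injective f &
    forall i, (dsorted e N <= deg e (f i))%N.
Proof.
move=> N_le_m; set S := [set i | (dsorted e N <= deg e i)%N].
suff S_big : (N <= #|S|)%N.
  exists (fun i => enum_val (widen_ord S_big i)).
    by move=> i j /enum_val_inj /(congr1 val) /= /val_inj.
  by move=> i; have := enum_valP (widen_ord S_big i); rewrite inE.
have [-> // | N_gt0] := posnP N.
have size_degs : size (degs_sorted e) = m.
  by rewrite size_sort size_map size_enum_ord.
have geq_trans : transitive geq by move=> a b c ba cb; exact: leq_trans cb ba.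
have N_size : (N.-1 < size (degs_sorted e))%N by rewrite prednK // size_degs.
have degs_sorted_geq : sorted geq (degs_sorted e).
  exact: sort_sorted (fun a b => leq_total b a) _.
have := count_ge_nth_sorted 0 geq_trans leqnn degs_sorted_geq N_size.
by rewrite prednK // count_sort count_map count_enum_card.
Qed.

End SimpleGraph.

Theorem mainTheorem13 (k N m : nat) (e : rel 'I_m) :
  (0 < k)%N -> is_NPO k N -> (N <= m)%N -> simple_graph e ->
  (dsorted e N)%:R <= lambda (lap_mx e) k.
Proof.
move=> k_gt0 [npo_N _] N_le_m e_simple; set d := dsorted e N.
have [f f_inj f_high] := top_degree_vertices e N_le_m.
have H_simple := induced_simple e_simple f.
have H_nonpos := npo_N N _ (leqnn N) H_simple.
have deg_ge i : d%:R <= (\row_j (deg e (f j))%:R) 0 i :> algC.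
  by rewrite mxE ler_nat f_high.
have interlacing := compression_count
  (hermitian_normalmx (lap_hermsymmx e_simple))
  (hermitian_normalmx (adj_hermsymmx H_simple))
  (rowsub_unitary f_inj (@unitarymx1 m)) (lap_compress e f_inj) deg_ge.
(* So at most m - k eigenvalues of L(G) are below d. *)
have split := count_eigs_split (lap_hermsymmx e_simple) (realn _ d).
apply: lambda_ge => //; first exact: lap_hermsymmx.
rewrite -(leq_add2r (count (fun x => x < d%:R) (eigs (lap_mx e)))) split.
exact: leq_trans (leq_add H_nonpos (leqnn _)) interlacing.
Qed.
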